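(* Let $n\ge 1$. The number of disjoint preference profiles with $n$ men and $n$ women is at most $(n^2)!$ and is divisible by $(n!)^2$.
   Context: A preference profile for $n$ men and $n$ women consists of, for each man, a strict ranking of the $n$ women (a bijection from the women to $\{1,\dots,n\}$, where $1$ is his favorite), and for each woman, a strict ranking of the $n$ men (a bijection from the men to $\{1,\dots,n\}$). Men and women are labeled, so there are $(n!)^{2n}$ profiles. For a man $M$ and woman $W$, their mutual ranking is the ordered pair $(i,j)$ where $i$ is the rank $M$ gives $W$ and $j$ is the rank $W$ gives $M$. A profile is disjoint if each ordered pair $(i,j)\in\{1,\dots,n\}^2$ occurs as the mutual ranking of exactly one of the $n^2$ man–woman pairs. *)

From mathcomp Require Import all_boot all_order all_fingroup.
Set Implicit Arguments. Unset Strict Implicit. Unset Printing Implicit Defensive.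

(* Men, women and ranks are all indexed by 'I_n; rank r : 'I_n stands for
   the rank r+1 in {1,...,n}.  A man's ranking of the women is a bijection
   women -> ranks, i.e. a permutation of 'I_n; likewise for women. *)
Definition profile (n : nat) : finType :=
  ({ffun 'I_n -> {perm 'I_n}} * {ffun 'I_n -> {perm 'I_n}})%type.

Definition mutual_ranking n (P : profile n) (m w : 'I_n) : 'I_n * 'I_n :=
  (P.1 m w, P.2 w m).

Definition disjoint_profile n (P : profile n) : bool :=
  [forall ij : 'I_n * 'I_n,
     #|[set mw : 'I_n * 'I_n | mutual_ranking P mw.1 mw.2 == ij]| == 1].

(* A profile is determined by its mutual-ranking map on the n^2 man-woman pairs,
   and it is disjoint exactly when that map is a bijection; hence there are at
   most (n^2)! disjoint profiles.  Relabelling the men and the women by a pair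
   of permutations preserves disjointness, and a disjoint profile is fixed only
   by the trivial relabelling, since its mutual rankings tell all pairs apart.
   So S_n x S_n acts freely on the disjoint profiles and (n!)^2 divides their
   number. *)

From mathcomp Require Import all_boot all_order all_fingroup.

Set Implicit Arguments.
Unset Strict Implicit.
Unset Printing Implicit Defensive.

Lemma card_free_action_dvdn (aT : finGroupType) (rT : finType)
    (to : {action aT &-> rT}) (G : {group aT}) (S : {set rT}) :
  [acts G, on S | to] -> {in S, forall x, ('C_G[x | to])%g = 1%g} ->
  #|G| %| #|S|.
Proof.
move=> actsGS free.
have card_orbits : {in orbit to G @: S, forall A : {set rT}, #|A| = #|G|}.
  by move=> _ /imsetP[x Sx ->]; rewrite card_orbit free // indexg1.
rewrite (card_uniform_partition card_orbits (orbit_partition actsGS)).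
exact: dvdn_mull.
Qed.

Lemma forall_card_preim1 (T : finType) (f : T -> T) :
  [forall y, #|[set x | f x == y]| == 1] = injectiveb f.
Proof.
apply/forallP/injectiveP => [preim1 x y fxy | injf y].
  have /cards1P[z preim_fx] := preim1 (f x).
  have : x \in [set z] by rewrite -preim_fx inE.
  have : y \in [set z] by rewrite -preim_fx inE fxy.
  by rewrite !inE => /eqP-> /eqP->.
suff -> : [set x | f x == y] = [set invF injf y] by rewrite cards1.
by apply/setP => x; rewrite !inE; apply/eqP/eqP => [<- | ->];
  rewrite ?invF_f ?f_invF.
Qed.

Section DisjointProfiles.

Variable n : nat.

Local Notation relabelling := ({perm 'I_n} * {perm 'I_n})%type.

Implicit Types (P Q : profile n) (g : relabelling).

Lemma mutual_ranking_inj P Q : mutual_ranking P =2 mutual_ranking Q -> P = Q.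
Proof.
case: P Q => [P1 P2] [Q1 Q2] eqPQ; congr pair.
  by apply/ffunP => m; apply/permP => w; case: (eqPQ m w).
by apply/ffunP => w; apply/permP => m; case: (eqPQ m w).
Qed.

Lemma disjoint_profileE P :
  disjoint_profile P = injectiveb (fun mw => mutual_ranking P mw.1 mw.2).
Proof. exact: forall_card_preim1. Qed.

Lemma card_disjoint_profiles_leq :
  #|[set P : profile n | disjoint_profile P]| <= (n ^ 2)`!.
Proof.
pose F P : {ffun 'I_n * 'I_n -> 'I_n * 'I_n} :=
  [ffun mw => mutual_ranking P mw.1 mw.2].
have injF : injective F.
  move=> P Q /ffunP eqF; apply: mutual_ranking_inj => m w.
  by have := eqF (m, w); rewrite !ffunE.
have -> : (n ^ 2)`! =
    #|[set f : {ffun 'I_n * 'I_n -> 'I_n * 'I_n} | injectiveb f]|.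
  by rewrite card_inj_ffuns ffactnn card_prod card_ord.
rewrite -(card_imset _ injF); apply/subset_leq_card/subsetP => f /imsetP[P].
rewrite !inE disjoint_profileE => /injectiveP injP ->.
by apply/injectiveP => x y; rewrite !ffunE => /injP.
Qed.

Definition relabel P g : profile n :=
  ([ffun m => g.2^-1 * P.1 (g.1^-1 m)], [ffun w => g.1^-1 * P.2 (g.2^-1 w)])%g.

Lemma mutual_ranking_relabel P g m w :
  mutual_ranking (relabel P g) m w = mutual_ranking P (g.1^-1 m)%g (g.2^-1 w)%g.
Proof. by rewrite /mutual_ranking /= !ffunE !permM. Qed.

Lemma relabel1 P : relabel P 1%g = P.
Proof.
apply: mutual_ranking_inj => m w.
by rewrite mutual_ranking_relabel !invg1 !perm1.
Qed.

Lemma relabelM P g h : relabel P (g * h)%g = relabel (relabel P g) h.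
Proof.
apply: mutual_ranking_inj => m w; rewrite !mutual_ranking_relabel.
by rewrite !invMg !permM.
Qed.

Definition relabel_action := TotalAction relabel1 relabelM.

Lemma relabel_disjoint P g :
  disjoint_profile P -> disjoint_profile (relabel P g).
Proof.
rewrite !disjoint_profileE => /injectiveP injP.
apply/injectiveP => -[m w] [m' w']; rewrite /= !mutual_ranking_relabel.
by move=> /(injP (_, _) (_, _))[/perm_inj-> /perm_inj->].
Qed.

Lemma acts_relabel_disjoint :
  [acts [set: relabelling], on [set P : profile n | disjoint_profile P]
     | relabel_action].
Proof.
apply/actsP => g _ P; rewrite !inE /=.
apply/idP/idP; last exact: relabel_disjoint.
by move=> /(relabel_disjoint g^-1)%g; rewrite -relabelM mulgV relabel1.
Qed.

Lemma relabel_free P g : disjoint_profile P -> relabel P g = P -> g = 1%g.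
Proof.
rewrite disjoint_profileE => /injectiveP injP fixP.
have fixes_pairs m w : (g.1^-1 m, g.2^-1 w)%g = (m, w).
  by apply: injP; rewrite /= -mutual_ranking_relabel fixP.
case: g {fixP} fixes_pairs => g1 g2 /= fixes_pairs.
have [inv_g1 inv_g2] : (g1^-1 = 1 /\ g2^-1 = 1)%g.
  by split; apply/permP => z; rewrite perm1; case: (fixes_pairs z z).
by rewrite -[g1]invgK -[g2]invgK inv_g1 inv_g2 invg1.
Qed.

Lemma stabilizer_disjoint_profile P :
  disjoint_profile P ->
  ('C_([set: relabelling])[P | relabel_action])%g = 1%g.
Proof.
move=> disjP; apply/trivgP/subsetP => g /setIP[_ /astab1P fixP].
by rewrite inE (relabel_free disjP fixP).
Qed.

End DisjointProfiles.

Theorem mainTheorem1 (n : nat) (hn : 1 <= n) :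
  #|[set P : profile n | disjoint_profile P]| <= (n ^ 2)`! /\
  (n`! ^ 2 %| #|[set P : profile n | disjoint_profile P]|).
Proof.
split; first exact: card_disjoint_profiles_leq.
have -> : n`! ^ 2 = #|[set: {perm 'I_n} * {perm 'I_n}]|.
  by rewrite cardsT card_prod card_Sn.
apply: card_free_action_dvdn (@acts_relabel_disjoint n) _ => P.
by rewrite inE; apply: stabilizer_disjoint_profile.
Qed.
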